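(* Let $E^W_0=0$. The generating function for the expected number of napkinless diners under algorithm $W$ is \[ \sum_{n\ge 0}E^W_n z^n=\frac{z^3(2-z)}{2(1-z)^2(2+z)}, \] and for every $n\ge 0$, \[ E^W_{n+3}=\frac{(3n+7)2^{n-1}+(-1)^n}{9\cdot 2^n}. \]
   Context: Seating model. A circular table has $n\ge 1$ seats, with exactly one napkin between each pair of adjacent seats ($n$ napkins in total). ''Left'' and ''right'' are from the perspective of a seated diner. Diners $1,\dots,n$ arrive in this order and a maitre d' chooses a seat for each. A preference order is $\sigma=(\sigma_1,\dots,\sigma_n)\in\{-1,1\}^n$, where $\sigma_j=+1$ means diner $j$ prefers the napkin on their right and $\sigma_j=-1$ the napkin on their left. When diner $j$ is seated, they take their preferred adjacent napkin if it is still on the table; otherwise the other adjacent napkin if still on the table; otherwise they are napkinless. The maitre d' observes which napkin each seated diner takes. The ''previous diner'' means the most recently seated diner. Algorithm $W$ (trap setting). Seat diner 1; the primary direction $d\in\{\text{left},\text{right}\}$ is the side of the napkin diner 1 takes. All movement below is in direction $d$. (W1) If the two seats at distance 1 and 2 in direction $d$ from the previous diner's seat are both empty, go to W2; otherwise go to W4. (W2) If the previous diner took the napkin on their side $d$, seat the next diner two seats in direction $d$ from the previous diner and return to W1; otherwise go to W3. (W3) Seat the next diner one seat in direction $d$ from the previous diner and return to W1. (W4) Seat all remaining diners, one at a time in order of arrival, in the empty seats, in the order in which these seats are encountered moving in direction $d$ starting from diner 1's seat. For $n\ge1$, $\nu_W(\sigma)$ is the number of napkinless diners when the $n$ diners with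 preference order $\sigma$ are seated at the circular table with $n$ seats by algorithm $W$, and $E^W_n=2^{-n}\sum_{\sigma\in\{-1,1\}^n}\nu_W(\sigma)$ is its expectation for uniformly random $\sigma$. *)

From Stdlib Require Import Reals Arith List ZArith.
From Coquelicot Require Import Coquelicot.
Import ListNotations.
Open Scope R_scope.

(* Seats 0..n-1 around the table; napkin i lies between seat i and seat i+1
   (mod n).  Direction "right" (bool true) means increasing seat index; the
   napkin on the right of the diner at seat p is napkin p, the one on the left
   is napkin p-1 (mod n).  A preference true = +1 (right), false = -1 (left). *)

Definition upd (f : nat -> bool) (i : nat) : nat -> bool :=
  fun j => if Nat.eqb j i then true else f j.

(* Diner with preference b sits at seat p; returns the new napkin state and
   the side of the napkin taken (Some true = right, Some false = left,
   None = napkinless). *)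
Definition take_napkin (n : nat) (nap : nat -> bool) (p : nat) (b : bool)
  : (nat -> bool) * option bool :=
  let r := (p mod n)%nat in
  let l := ((p + n - 1) mod n)%nat in
  let pref := if b then r else l in
  let oth := if b then l else r in
  if negb (nap pref) then (upd nap pref, Some b)
  else if negb (nap oth) then (upd nap oth, Some (negb b))
  else (nap, None).

Definition move (n : nat) (d : bool) (p k : nat) : nat :=
  if d then ((p + k) mod n)%nat else ((p + (n - k mod n)) mod n)%nat.

Fixpoint find_empty (n : nat) (d : bool) (occ : nat -> bool) (k fuel : nat)
  : nat :=
  match fuel with
  | O => O
  | S f => let q := move n d 0 k in
           if occ q then find_empty n d occ (S k) f else q
  end.

(* Seat diners 2,3,... with preferences sigma by algorithm W.
   prev = previous diner's seat, prevd = previous diner took the napkin on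
   side d, w4 = step W4 has been reached. *)
Fixpoint runW (n : nat) (d : bool) (occ nap : nat -> bool) (prev : nat)
  (prevd w4 : bool) (sigma : list bool) : nat :=
  match sigma with
  | [] => O
  | b :: rest =>
      let both_empty := andb (negb (occ (move n d prev 1))) (negb (occ (move n d prev 2))) in
      let w4' := orb w4 (negb both_empty) in
      let p := if w4' then find_empty n d occ 0 n
               else if prevd then move n d prev 2 else move n d prev 1 in
      let (nap', side) := take_napkin n nap p b in
      let miss := match side with None => 1%nat | Some _ => 0%nat end in
      let pd := match side with Some s => Bool.eqb s d | None => false end in
      (miss + runW n d (upd occ p) nap' p pd w4' rest)%nat
  end.

Definition nuW (n : nat) (sigma : list bool) : nat :=
  match sigma with
  | [] => O
  | b :: rest =>
      let (nap1, side) := take_napkin n (fun _ => false) 0 b in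
      let miss := match side with None => 1%nat | Some _ => 0%nat end in
      let d := match side with Some s => s | None => b end in
      (miss + runW n d (upd (fun _ => false) 0) nap1 0 true false rest)%nat
  end.

Fixpoint all_prefs (n : nat) : list (list bool) :=
  match n with
  | O => [[]]
  | S k => flat_map (fun l => [true :: l; false :: l]) (all_prefs k)
  end.

(* E^W_n; note E^W_0 = 0 (the single empty order seats nobody). *)
Definition EW (n : nat) : R :=
  fold_right Rplus 0 (map (fun s => INR (nuW n s)) (all_prefs n)) / 2 ^ n.

(* Diner 1 fixes the direction d, and everything is then read in positions
   0, 1, ..., n-1 along d.  During the trap-setting steps W1-W3 each newly
   seated diner finds both adjacent napkins on the table; a trap (an empty seat
   whose two napkins are gone) is created exactly when the diner seated two
   positions past one who took its d-side napkin takes the napkin on the other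
   side, which happens with probability 1/2.  When W4 starts, no two empty
   seats are adjacent, so the napkinless diners are exactly those seated at
   traps.  Hence E^W_{m+1} = A_m, where A_r (resp. B_r) is the expected number
   of traps still to be set when r positions lie ahead of a previous diner who
   did (resp. did not) take its d-side napkin:
     A_{r+2} = (1 + A_r + B_r)/2,   B_{r+2} = (A_{r+1} + B_{r+1})/2,
   so A_r = (3r+1)/18 + 4/9 (-1/2)^r for r >= 1.  Both claims follow. *)

From Stdlib Require Import Reals Arith List ZArith.
From Coquelicot Require Import Coquelicot.
From Stdlib Require Import Lia Bool Lra.
Import ListNotations.
Open Scope nat_scope.

Fixpoint nsum (n : nat) (f : nat -> nat) : nat :=
  match n with 0 => 0 | S m => nsum m f + f m end.

Lemma nsum_ext n f g : (forall j, j < n -> f j = g j) -> nsum n f = nsum n g.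
Proof. induction n as [|n IH]; intros H; simpl; [|rewrite IH, H]; auto. Qed.

Lemma nsum_le n f g : (forall j, j < n -> f j <= g j) -> nsum n f <= nsum n g.
Proof.
  induction n as [|n IH]; intros H; simpl; [lia|].
  specialize (IH (fun j Hj => H j ltac:(lia))). specialize (H n ltac:(lia)). lia.
Qed.

Lemma nsum_const n c : nsum n (fun _ => c) = n * c.
Proof. induction n as [|n IH]; simpl; lia. Qed.

Lemma nsum_update n f g i : i < n -> (forall j, j < n -> j <> i -> f j = g j) ->
  nsum n f + g i = nsum n g + f i.
Proof.
  induction n as [|n IH]; intros Hi H; simpl; [lia|].
  destruct (Nat.eq_dec i n) as [->|Hne].
  - rewrite (nsum_ext n f g) by (intros j Hj; apply H; lia). lia.
  - rewrite (H n) by lia. specialize (IH ltac:(lia) (fun j Hj => H j ltac:(lia))). lia.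
Qed.

Lemma nsum_pos n f : 0 < nsum n f -> exists j, j < n /\ 0 < f j.
Proof.
  induction n as [|n IH]; simpl; intros H; [lia|].
  destruct (f n) eqn:E.
  - destruct IH as [j [Hj Hf]]; [lia|]. exists j; split; auto.
  - exists n; split; lia.
Qed.

Lemma mod_sub_self n x : n <= x < 2 * n -> x mod n = x - n.
Proof.
  intros H. replace x with ((x - n) + 1 * n) at 1 by lia.
  rewrite Nat.Div0.mod_add. apply Nat.mod_small. lia.
Qed.

Open Scope R_scope.

Definition sum_prefs (k : nat) (f : list bool -> R) : R :=
  fold_right Rplus 0 (map f (all_prefs k)).

Lemma sum_prefs_S k f :
  sum_prefs (S k) f = sum_prefs k (fun s => f (true :: s) + f (false :: s)).
Proof.
  unfold sum_prefs. simpl. induction (all_prefs k) as [|s ss IH]; simpl; [lra|].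
  rewrite IH. lra.
Qed.

Lemma sum_prefs_ext k f g :
  (forall s, length s = k -> f s = g s) -> sum_prefs k f = sum_prefs k g.
Proof.
  revert f g. induction k as [|k IH]; intros f g H.
  - unfold sum_prefs. simpl. now rewrite H.
  - rewrite !sum_prefs_S. apply IH. intros s Hs. now rewrite !H by (simpl; lia).
Qed.

Lemma sum_prefs_plus k f g :
  sum_prefs k (fun s => f s + g s) = sum_prefs k f + sum_prefs k g.
Proof. unfold sum_prefs. induction (all_prefs k) as [|s ss IH]; simpl; lra. Qed.

Lemma sum_prefs_const k c : sum_prefs k (fun _ => c) = 2 ^ k * c.
Proof.
  induction k as [|k IH]; [unfold sum_prefs; simpl; lra|].
  rewrite sum_prefs_S, sum_prefs_plus, IH. simpl. lra.
Qed.

Open Scope nat_scope.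

Section Table.

Variables (n : nat) (d : bool).

(* Position [j] is the seat [j] steps from diner 1's seat in direction [d];
   [napkin j] is the napkin between positions [j] and [j + 1], numbered as
   the seat to whose right it lies. *)
Definition seat (j : nat) : nat := move n d 0 j.
Definition napkin (j : nat) : nat := if d then seat j else seat (S j).

Lemma seat0 : seat 0 = 0.
Proof.
  unfold seat, move. destruct d; simpl.
  - apply Nat.Div0.mod_0_l.
  - rewrite Nat.Div0.mod_0_l, Nat.sub_0_r. apply Nat.Div0.mod_same.
Qed.

Lemma seat_pos j : 1 <= j < n -> seat j = if d then j else n - j.
Proof.
  intros Hj. unfold seat, move. rewrite Nat.add_0_l, (Nat.mod_small j) by lia.
  destruct d; [reflexivity|apply Nat.mod_small; lia].
Qed.

Lemma napkin_eq j : j < n -> napkin j = if d then j else n - 1 - j.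
Proof.
  intros Hj. unfold napkin. destruct d eqn:Hd.
  - destruct j; [apply seat0|rewrite seat_pos, Hd by lia; reflexivity].
  - destruct (Nat.eq_dec (S j) n) as [HS|HS].
    + unfold seat, move. rewrite Hd, HS, Nat.Div0.mod_same, Nat.sub_0_r, Nat.Div0.mod_same. lia.
    + rewrite seat_pos, Hd by lia. lia.
Qed.

Lemma seat_inj i j : i < n -> j < n -> seat i = seat j -> i = j.
Proof.
  intros Hi Hj. destruct i, j; rewrite ?seat0, ?seat_pos by lia; destruct d; lia.
Qed.

Lemma napkin_inj i j : i < n -> j < n -> napkin i = napkin j -> i = j.
Proof. intros Hi Hj. rewrite !napkin_eq by lia. destruct d; lia. Qed.

Lemma upd_seat occ i j : i < n -> j < n ->
  upd occ (seat i) (seat j) = (j =? i) || occ (seat j).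
Proof.
  intros Hi Hj. unfold upd. destruct (Nat.eqb_spec j i) as [->|Hne].
  - now rewrite Nat.eqb_refl.
  - destruct (Nat.eqb_spec (seat j) (seat i)) as [E|]; auto.
    apply seat_inj in E; lia.
Qed.

Lemma upd_napkin nap i j : i < n -> j < n ->
  upd nap (napkin i) (napkin j) = (j =? i) || nap (napkin j).
Proof.
  intros Hi Hj. unfold upd. destruct (Nat.eqb_spec j i) as [->|Hne].
  - now rewrite Nat.eqb_refl.
  - destruct (Nat.eqb_spec (napkin j) (napkin i)) as [E|]; auto.
    apply napkin_inj in E; lia.
Qed.

Lemma move_seat p k : 1 <= k -> p + k < n -> move n d (seat p) k = seat (p + k).
Proof.
  intros Hk H. destruct p as [|p]; [now rewrite seat0|].
  rewrite !seat_pos by lia. unfold move. rewrite (Nat.mod_small k) by lia.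
  destruct d; [apply Nat.mod_small|rewrite mod_sub_self]; lia.
Qed.

Lemma move_seat_wrap p k : p < n -> p + k = n -> move n d (seat p) k = seat 0.
Proof.
  intros Hp H. rewrite seat0. unfold move. destruct p as [|p].
  - simpl in H; subst k. rewrite seat0. destruct d; simpl.
    + apply Nat.Div0.mod_same.
    + rewrite Nat.Div0.mod_same, Nat.sub_0_r. apply Nat.Div0.mod_same.
  - rewrite seat_pos by lia. rewrite (Nat.mod_small k) by lia.
    destruct d; [rewrite <- H; apply Nat.Div0.mod_same|rewrite mod_sub_self]; lia.
Qed.

Lemma take_napkin_seat nap j b : 1 <= j < n ->
  take_napkin n nap (seat j) b =
  (let pref := napkin (if Bool.eqb b d then j else j - 1) in
   let oth := napkin (if Bool.eqb b d then j - 1 else j) in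
   if negb (nap pref) then (upd nap pref, Some b)
   else if negb (nap oth) then (upd nap oth, Some (negb b))
   else (nap, None)).
Proof.
  intros Hj. unfold take_napkin. cbv zeta.
  assert (Hright : seat j mod n = napkin (if d then j else j - 1)).
  { rewrite seat_pos, napkin_eq by (destruct d; lia). destruct d; rewrite Nat.mod_small; lia. }
  assert (Hleft : (seat j + n - 1) mod n = napkin (if d then j - 1 else j)).
  { rewrite seat_pos, napkin_eq by (destruct d; lia). destruct d; rewrite mod_sub_self; lia. }
  rewrite Hright, Hleft. destruct b, d; reflexivity.
Qed.

Lemma take_napkin_seat_cases nap j b : 1 <= j < n ->
  (take_napkin n nap (seat j) b = (nap, None) /\
   nap (napkin j) && nap (napkin (j - 1)) = true) \/
  (exists i side, take_napkin n nap (seat j) b = (upd nap (napkin i), Some side) /\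
   (i = j \/ i = j - 1) /\ nap (napkin j) && nap (napkin (j - 1)) = false).
Proof.
  intros Hj. rewrite take_napkin_seat by lia. cbv zeta.
  destruct (Bool.eqb b d); destruct (nap (napkin j)), (nap (napkin (j - 1))); simpl;
    first [left; split; reflexivity | right; do 2 eexists; split; [reflexivity|auto]].
Qed.

Definition empty_at (occ : nat -> bool) (j : nat) : nat :=
  if occ (seat j) then 0 else 1.

(* At [j = 0] the second napkin should be [napkin (n - 1)], but position 0
   (diner 1's seat) is always occupied. *)
Definition trap_at (occ nap : nat -> bool) (j : nat) : nat :=
  if occ (seat j) then 0
  else if nap (napkin j) && nap (napkin (j - 1)) then 1 else 0.

Definition num_empty (occ : nat -> bool) : nat := nsum n (empty_at occ).
Definition num_traps (occ nap : nat -> bool) : nat := nsum n (trap_at occ nap).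

Definition isolated (occ : nat -> bool) : Prop :=
  forall j, j < n -> occ (seat j) = false ->
  1 <= j /\ (S j < n -> occ (seat (S j)) = true).

Lemma isolated_fill occ i : i < n -> isolated occ -> isolated (upd occ (seat i)).
Proof.
  intros Hi Hiso j Hj. rewrite upd_seat by lia. intros [_ Hfree]%orb_false_iff.
  destruct (Hiso j Hj Hfree) as [Hj1 Hnext]. split; [exact Hj1|].
  intros HS. rewrite upd_seat, Hnext by lia. apply orb_true_r.
Qed.

Lemma isolated_apart occ i j : isolated occ -> i < n -> j < n -> i <> j ->
  occ (seat i) = false -> occ (seat j) = false -> S i < j \/ S j < i.
Proof.
  intros Hiso Hi Hj Hij Hfi Hfj.
  destruct (Nat.eq_dec j (S i)) as [->|].
  { rewrite (proj2 (Hiso i Hi Hfi)) in Hfj by lia. discriminate. }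
  destruct (Nat.eq_dec i (S j)) as [->|].
  { rewrite (proj2 (Hiso j Hj Hfj)) in Hfi by lia. discriminate. }
  lia.
Qed.

Lemma num_empty_fill occ i : i < n -> occ (seat i) = false ->
  num_empty occ = S (num_empty (upd occ (seat i))).
Proof.
  intros Hi Hfree. unfold num_empty.
  assert (Hnew : empty_at (upd occ (seat i)) i = 0).
  { unfold empty_at. now rewrite upd_seat, Nat.eqb_refl by lia. }
  assert (Hold : empty_at occ i = 1) by (unfold empty_at; now rewrite Hfree).
  enough (nsum n (empty_at occ) + empty_at (upd occ (seat i)) i =
          nsum n (empty_at (upd occ (seat i))) + empty_at occ i) by lia.
  apply nsum_update; [exact Hi|]. intros j Hj Hji. unfold empty_at.
  rewrite upd_seat by lia. apply Nat.eqb_neq in Hji. now rewrite Hji.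
Qed.

Lemma num_traps_fill occ nap nap' i : i < n -> occ (seat i) = false ->
  (forall j, j < n -> j <> i -> occ (seat j) = false ->
   nap' (napkin j) && nap' (napkin (j - 1)) = nap (napkin j) && nap (napkin (j - 1))) ->
  num_traps occ nap = num_traps (upd occ (seat i)) nap' + trap_at occ nap i.
Proof.
  intros Hi Hfree Hnap. unfold num_traps.
  assert (Hnew : trap_at (upd occ (seat i)) nap' i = 0).
  { unfold trap_at. now rewrite upd_seat, Nat.eqb_refl by lia. }
  enough (nsum n (trap_at occ nap) + trap_at (upd occ (seat i)) nap' i =
          nsum n (trap_at (upd occ (seat i)) nap') + trap_at occ nap i) by lia.
  apply nsum_update; [exact Hi|]. intros j Hj Hji. unfold trap_at.
  rewrite upd_seat by lia. apply Nat.eqb_neq in Hji as Hb. rewrite Hb. simpl.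
  destruct (occ (seat j)) eqn:Hj'; [reflexivity|]. now rewrite Hnap.
Qed.

Lemma find_empty_spec occ fuel k : (exists j, k <= j < k + fuel /\ occ (seat j) = false) ->
  exists j, k <= j < k + fuel /\ occ (seat j) = false /\ find_empty n d occ k fuel = seat j.
Proof.
  revert k. induction fuel as [|fuel IH]; intros k [j [Hj Hfree]]; [lia|].
  simpl. change (move n d 0 k) with (seat k).
  destruct (occ (seat k)) eqn:Hk.
  - destruct (IH (S k)) as [j' [Hj' Hrest]].
    + exists j. split; [|exact Hfree]. destruct (Nat.eq_dec j k); [congruence|lia].
    + exists j'. split; [lia|exact Hrest].
  - exists k. split; [lia|auto].
Qed.

Lemma runW_W4 s : forall occ nap prev prevd, isolated occ -> length s = num_empty occ ->
  runW n d occ nap prev prevd true s = num_traps occ nap.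
Proof.
  induction s as [|b s IH]; intros occ nap prev prevd Hiso Hlen; simpl in Hlen.
  - symmetry. apply Nat.le_0_r. rewrite Hlen. apply nsum_le. intros j _.
    unfold trap_at, empty_at. destruct (occ (seat j)); [lia|]. destruct (_ && _); lia.
  - destruct (nsum_pos n (empty_at occ)) as [j1 [Hj1 Hempty1]]; [unfold num_empty in Hlen; lia|].
    destruct (find_empty_spec occ n 0) as [j0 [Hj0 [Hfree Hfind]]].
    { exists j1. split; [lia|]. unfold empty_at in Hempty1. destruct (occ (seat j1)); [lia|auto]. }
    destruct (Hiso j0 ltac:(lia) Hfree) as [Hj0pos _].
    cbn -[move take_napkin upd find_empty]. rewrite Hfind.
    assert (Hj0n : j0 < n) by lia.
    assert (Hlen' : length s = num_empty (upd occ (seat j0))).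
    { rewrite (num_empty_fill occ j0 Hj0n Hfree) in Hlen. lia. }
    pose proof (isolated_fill occ j0 Hj0n Hiso) as Hiso'.
    destruct (take_napkin_seat_cases nap j0 b)
      as [[Htake Htrap]|[i [side [Htake [Hi Hnot_trap]]]]]; [lia| |];
      rewrite Htake; cbn -[move upd find_empty]; rewrite IH by assumption.
    + rewrite (num_traps_fill occ nap nap j0) by auto.
      unfold trap_at. rewrite Hfree, Htrap. lia.
    + rewrite (num_traps_fill occ nap (upd nap (napkin i)) j0 Hj0n Hfree).
      * unfold trap_at. rewrite Hfree, Hnot_trap. lia.
      * intros j Hj Hji Hfj.
        destruct (Hiso j Hj Hfj) as [Hjpos _].
        pose proof (isolated_apart occ j0 j Hiso Hj0n Hj ltac:(auto) Hfree Hfj).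
        rewrite !upd_napkin by lia.
        replace (j =? i) with false by (symmetry; apply Nat.eqb_neq; lia).
        replace (j - 1 =? i) with false by (symmetry; apply Nat.eqb_neq; lia).
        reflexivity.
Qed.

Record setting_state (occ nap : nat -> bool) (p : nat) (prevd : bool) : Prop := {
  prev_lt : p < n;
  prev_occupied : occ (seat p) = true;
  ahead_free : forall j, p < j < n -> occ (seat j) = false;
  prev_napkin : nap (napkin p) = prevd;
  ahead_napkins : forall j, p < j < n -> nap (napkin j) = false;
  behind_isolated : forall j, j <= p -> occ (seat j) = false ->
                    1 <= j /\ occ (seat (S j)) = true }.

Lemma setting_state_first occ nap p prevd :
  setting_state occ nap p prevd -> occ (seat 0) = true.
Proof.
  intros st. destruct (occ (seat 0)) eqn:H0; [reflexivity|].
  destruct (behind_isolated _ _ _ _ st 0 ltac:(lia) H0). lia.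
Qed.

Lemma setting_state_isolated occ nap p prevd :
  setting_state occ nap p prevd -> n <= p + 2 -> isolated occ.
Proof.
  intros st Hend j Hj Hfree. destruct (le_lt_dec j p) as [Hle|Hlt].
  - destruct (behind_isolated _ _ _ _ st j Hle Hfree). auto.
  - split; lia.
Qed.

Definition next_pos (p : nat) (prevd : bool) : nat := if prevd then p + 2 else p + 1.

Lemma runW_setting_step occ nap p prevd b s :
  setting_state occ nap p prevd -> p + 2 < n ->
  let q := next_pos p prevd in
  runW n d occ nap (seat p) prevd false (b :: s) =
  runW n d (upd occ (seat q)) (upd nap (napkin (if Bool.eqb b d then q else q - 1)))
       (seat q) (Bool.eqb b d) false s.
Proof.
  intros st Hp q. cbn -[seat move take_napkin upd find_empty].
  rewrite (move_seat p 1), (move_seat p 2), !(ahead_free _ _ _ _ st) by lia. simpl.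
  replace (if prevd then seat (p + 2) else seat (p + 1)) with (seat q)
    by (unfold q, next_pos; destruct prevd; reflexivity).
  assert (Hq : p < q < n) by (unfold q, next_pos; destruct prevd; lia).
  assert (Hfree_q : nap (napkin q) = false) by (apply (ahead_napkins _ _ _ _ st); lia).
  assert (Hfree_q1 : nap (napkin (q - 1)) = false).
  { unfold q, next_pos in *. destruct prevd.
    - apply (ahead_napkins _ _ _ _ st). lia.
    - replace (p + 1 - 1) with p by lia. apply (prev_napkin _ _ _ _ st). }
  rewrite take_napkin_seat by lia. cbv zeta.
  destruct (Bool.eqb b d) eqn:Hbd; rewrite ?Hfree_q, ?Hfree_q1; simpl; now rewrite ?Hbd.
Qed.

Lemma setting_state_step occ nap p prevd b :
  setting_state occ nap p prevd -> p + 2 < n ->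
  let q := next_pos p prevd in
  setting_state (upd occ (seat q)) (upd nap (napkin (if Bool.eqb b d then q else q - 1)))
                q (Bool.eqb b d).
Proof.
  intros st Hp q.
  assert (Hq : p < q <= p + 2 /\ (prevd = false -> q = p + 1))
    by (unfold q, next_pos; destruct prevd; split; try lia; discriminate).
  set (i := if Bool.eqb b d then q else q - 1).
  assert (Hi : i = q \/ i = q - 1) by (unfold i; destruct (Bool.eqb b d); auto).
  split.
  - lia.
  - rewrite upd_seat, Nat.eqb_refl by lia. reflexivity.
  - intros j Hj. rewrite upd_seat by lia.
    replace (j =? q) with false by (symmetry; apply Nat.eqb_neq; lia).
    apply (ahead_free _ _ _ _ st). lia.
  - rewrite upd_napkin by lia. unfold i. destruct (Bool.eqb b d).
    + now rewrite Nat.eqb_refl.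
    + replace (q =? q - 1) with false by (symmetry; apply Nat.eqb_neq; lia).
      apply (ahead_napkins _ _ _ _ st). lia.
  - intros j Hj. rewrite upd_napkin by lia.
    replace (j =? i) with false by (symmetry; apply Nat.eqb_neq; lia).
    apply (ahead_napkins _ _ _ _ st). lia.
  - intros j Hj. rewrite upd_seat by lia. intros [Hjq Hfree]%orb_false_iff.
    apply Nat.eqb_neq in Hjq. rewrite upd_seat by lia.
    destruct (le_lt_dec j p) as [Hle|Hlt].
    + destruct (behind_isolated _ _ _ _ st j Hle Hfree) as [Hj1 Hnext].
      rewrite Hnext. split; [lia|apply orb_true_r].
    + replace (S j =? q) with true by (symmetry; apply Nat.eqb_eq; lia). split; [lia|reflexivity].
Qed.

Lemma num_empty_step occ nap p prevd :
  setting_state occ nap p prevd -> p + 2 < n ->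
  num_empty occ = S (num_empty (upd occ (seat (next_pos p prevd)))).
Proof.
  intros st Hp. apply num_empty_fill; [|apply (ahead_free _ _ _ _ st)];
    unfold next_pos; destruct prevd; lia.
Qed.

Lemma trap_at_skipped occ nap p prevd b :
  setting_state occ nap p prevd -> p + 2 < n ->
  let q := next_pos p prevd in
  trap_at (upd occ (seat q)) (upd nap (napkin (if Bool.eqb b d then q else q - 1))) (p + 1) =
  if prevd && negb (Bool.eqb b d) then 1 else 0.
Proof.
  intros st Hp. unfold next_pos, trap_at. destruct prevd; cbv zeta iota.
  - rewrite upd_seat by lia.
    replace (p + 1 =? p + 2) with false by (symmetry; apply Nat.eqb_neq; lia).
    replace (p + 1 - 1) with p by lia.
    rewrite (ahead_free _ _ _ _ st) by lia.
    destruct (Bool.eqb b d); rewrite !upd_napkin, (ahead_napkins _ _ _ _ st),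
      (prev_napkin _ _ _ _ st), orb_true_r by lia; simpl.
    + now replace (p + 1 =? p + 2) with false by (symmetry; apply Nat.eqb_neq; lia).
    + now replace (p + 1 =? p + 2 - 1) with true by (symmetry; apply Nat.eqb_eq; lia).
  - rewrite upd_seat, Nat.eqb_refl by lia. reflexivity.
Qed.

Lemma num_traps_step occ nap p prevd b :
  setting_state occ nap p prevd -> p + 2 < n ->
  let q := next_pos p prevd in
  num_traps (upd occ (seat q)) (upd nap (napkin (if Bool.eqb b d then q else q - 1))) =
  num_traps occ nap + (if prevd && negb (Bool.eqb b d) then 1 else 0).
Proof.
  intros st Hp. pose proof (trap_at_skipped occ nap p prevd b st Hp) as Hnew.
  cbv zeta in Hnew |- *. set (q := next_pos p prevd) in *.
  assert (Hq : p < q <= p + 2) by (unfold q, next_pos; destruct prevd; lia).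
  clearbody q.
  set (occ' := upd occ (seat q)) in *.
  set (nap' := upd nap (napkin (if Bool.eqb b d then q else q - 1))) in *.
  assert (Hold : trap_at occ nap (p + 1) = 0).
  { unfold trap_at. rewrite (ahead_free _ _ _ _ st), (ahead_napkins _ _ _ _ st) by lia. reflexivity. }
  unfold num_traps.
  enough (nsum n (trap_at occ' nap') + trap_at occ nap (p + 1) =
          nsum n (trap_at occ nap) + trap_at occ' nap' (p + 1)) by lia.
  apply nsum_update; [lia|]. intros j Hj Hjp. unfold trap_at, occ', nap'.
  rewrite upd_seat by lia. destruct (Nat.eqb_spec j q) as [->|Hjq].
  { now rewrite (ahead_free _ _ _ _ st), (ahead_napkins _ _ _ _ st) by lia. }
  destruct (occ (seat j)) eqn:Hocc; [reflexivity|]. simpl.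
  assert (Hi : (if Bool.eqb b d then q else q - 1) >= q - 1 /\
               (if Bool.eqb b d then q else q - 1) <= q) by (destruct (Bool.eqb b d); lia).
  revert Hi. generalize (if Bool.eqb b d then q else q - 1). intros i Hi.
  rewrite !upd_napkin by lia. destruct (le_lt_dec j p) as [Hle|Hlt].
  - assert (j <> p) by (intros ->; rewrite (prev_occupied _ _ _ _ st) in Hocc; discriminate).
    replace (j =? i) with false by (symmetry; apply Nat.eqb_neq; lia).
    replace (j - 1 =? i) with false by (symmetry; apply Nat.eqb_neq; lia). reflexivity.
  - replace (j =? i) with false by (symmetry; apply Nat.eqb_neq; lia).
    now rewrite (ahead_napkins _ _ _ _ st) by lia.
Qed.


Lemma runW_setting_end occ nap p prevd s :
  setting_state occ nap p prevd -> n <= p + 2 -> length s = num_empty occ ->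
  runW n d occ nap (seat p) prevd false s = num_traps occ nap.
Proof.
  intros st Hend Hlen.
  pose proof (setting_state_isolated occ nap p prevd st Hend) as Hiso.
  destruct s as [|b s]; [exact (runW_W4 [] occ nap (seat p) prevd Hiso Hlen)|].
  rewrite <- (runW_W4 (b :: s) occ nap (seat p) prevd Hiso Hlen).
  assert (Hblocked : negb (occ (move n d (seat p) 1)) && negb (occ (move n d (seat p) 2)) = false).
  { pose proof (prev_lt _ _ _ _ st).
    pose proof (setting_state_first occ nap p prevd st) as Hfirst.
    destruct (Nat.eq_dec (p + 1) n).
    - now rewrite (move_seat_wrap p 1), Hfirst by lia.
    - rewrite (move_seat_wrap p 2), Hfirst by lia. apply andb_false_r. }
  cbn -[seat move take_napkin upd find_empty]. now rewrite Hblocked.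
Qed.

(* [expected_traps true r] and [expected_traps false r] are A_r and B_r. *)
Fixpoint expected_traps (prevd : bool) (r : nat) {struct r} : R :=
  match r with
  | S (S r' as r1) =>
      if prevd then (1 + expected_traps false r' + expected_traps true r') / 2
      else (expected_traps true r1 + expected_traps false r1) / 2
  | _ => 0%R
  end.

Lemma expected_traps_small prevd r : r <= 1 -> expected_traps prevd r = 0%R.
Proof. intros Hr. destruct r as [|[|r]]; [reflexivity|reflexivity|lia]. Qed.

Lemma expected_traps_next p prevd : p + 2 < n ->
  expected_traps prevd (n - 1 - p) =
  (((if prevd then 1 else 0) + expected_traps true (n - 1 - next_pos p prevd)
    + expected_traps false (n - 1 - next_pos p prevd)) / 2)%R.
Proof.
  intros Hp. unfold next_pos. destruct prevd; cbv iota.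
  all: replace (n - 1 - p) with (S (S (n - 1 - (p + 2)))) by lia.
  2: replace (n - 1 - (p + 1)) with (S (n - 1 - (p + 2))) by lia.
  all: generalize (n - 1 - (p + 2)); intros r.
  - change (expected_traps true (S (S r)))
      with ((1 + expected_traps false r + expected_traps true r) / 2)%R. lra.
  - change (expected_traps false (S (S r)))
      with ((expected_traps true (S r) + expected_traps false (S r)) / 2)%R. lra.
Qed.

Lemma sum_runW_setting k : forall occ nap p prevd,
  setting_state occ nap p prevd -> k = num_empty occ ->
  sum_prefs k (fun s => INR (runW n d occ nap (seat p) prevd false s)) =
  (2 ^ k * (INR (num_traps occ nap) + expected_traps prevd (n - 1 - p)))%R.
Proof.
  induction k as [|k IH]; intros occ nap p prevd st Hk;
    destruct (le_lt_dec n (p + 2)) as [Hend|Hp].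
  1, 3: rewrite <- sum_prefs_const; apply sum_prefs_ext; intros s Hs;
    rewrite runW_setting_end by (assumption || lia);
    rewrite expected_traps_small by lia; lra.
  - pose proof (num_empty_step occ nap p prevd st Hp). lia.
  - pose proof (num_empty_step occ nap p prevd st Hp) as Hempty.
    pose proof (fun b => setting_state_step occ nap p prevd b st Hp) as Hstate.
    pose proof (fun b => num_traps_step occ nap p prevd b st Hp) as Htraps.
    pose proof (fun b s => runW_setting_step occ nap p prevd b s st Hp) as Hrun.
    cbv zeta in Hstate, Htraps, Hrun.
    rewrite sum_prefs_S. erewrite sum_prefs_ext by (intros s _; rewrite !Hrun; reflexivity).
    rewrite sum_prefs_plus, !IH by (apply Hstate || lia).
    rewrite !Htraps, (expected_traps_next p prevd Hp).
    destruct d, prevd; simpl; rewrite ?plus_INR; simpl; lra.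
Qed.

End Table.

Lemma nuW_cons n b s : 0 < n ->
  nuW n (b :: s) =
  runW n b (upd (fun _ => false) (seat n b 0)) (upd (fun _ => false) (napkin n b 0))
       (seat n b 0) true false s.
Proof.
  intros Hn. rewrite seat0, napkin_eq by lia. unfold nuW, take_napkin. simpl.
  rewrite Nat.Div0.mod_0_l, (Nat.mod_small (n - 1)), Nat.sub_0_r by lia.
  destruct b; reflexivity.
Qed.

Section Start.

Variables (n : nat) (d : bool).
Hypothesis n_pos : 0 < n.

Let occ0 := upd (fun _ => false) (seat n d 0).
Let nap0 := upd (fun _ => false) (napkin n d 0).

Lemma setting_state_start : setting_state n d occ0 nap0 0 true.
Proof.
  split.
  - exact n_pos.
  - unfold occ0, upd. now rewrite Nat.eqb_refl.
  - intros j Hj. unfold occ0. rewrite upd_seat by lia.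
    replace (j =? 0) with false by (symmetry; apply Nat.eqb_neq; lia). reflexivity.
  - unfold nap0, upd. now rewrite Nat.eqb_refl.
  - intros j Hj. unfold nap0. rewrite upd_napkin by lia.
    replace (j =? 0) with false by (symmetry; apply Nat.eqb_neq; lia). reflexivity.
  - intros j Hj Hfree. replace j with 0 in Hfree by lia.
    unfold occ0, upd in Hfree. now rewrite Nat.eqb_refl in Hfree.
Qed.

Lemma num_empty_start : num_empty n d occ0 = n - 1.
Proof.
  pose proof (num_empty_fill n d (fun _ => false) 0 n_pos eq_refl) as H.
  assert (Hall : num_empty n d (fun _ => false) = n).
  { unfold num_empty, empty_at. rewrite nsum_const. lia. }
  fold occ0 in H. lia.
Qed.

Lemma num_traps_start : num_traps n d occ0 nap0 = 0.
Proof.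
  unfold num_traps. rewrite <- (Nat.mul_0_r n), <- nsum_const. apply nsum_ext.
  intros j Hj. unfold trap_at, occ0, nap0. rewrite upd_seat, upd_napkin by lia.
  destruct (Nat.eqb_spec j 0); reflexivity.
Qed.

End Start.

Open Scope R_scope.

Lemma EW_S m : EW (S m) = expected_traps true m.
Proof.
  assert (Hn : (0 < S m)%nat) by lia.
  change (EW (S m)) with (sum_prefs (S m) (fun s => INR (nuW (S m) s)) / 2 ^ S m).
  rewrite sum_prefs_S. erewrite sum_prefs_ext by (intros s _; rewrite !nuW_cons by exact Hn; reflexivity).
  rewrite sum_prefs_plus, !sum_runW_setting
    by first [exact (setting_state_start _ _ Hn) | rewrite num_empty_start by exact Hn; lia].
  rewrite !num_traps_start by exact Hn. replace (S m - 1 - 0)%nat with m by lia.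
  simpl. field. apply pow_nonzero. lra.
Qed.

Definition expected_traps_formula (prevd : bool) (r : nat) : R :=
  if prevd then (3 * INR r + 1) / 18 + 4 / 9 * (-1/2) ^ r
  else (3 * INR r - 5) / 18 - 2 / 9 * (-1/2) ^ r.

Lemma expected_traps_closed prevd r :
  (1 <= r)%nat -> expected_traps prevd r = expected_traps_formula prevd r.
Proof.
  intros Hr. destruct r as [|r]; [lia|]. clear Hr. revert prevd.
  enough (H : (forall b, expected_traps b (S r) = expected_traps_formula b (S r)) /\
              (forall b, expected_traps b (S (S r)) = expected_traps_formula b (S (S r))))
    by apply H.
  unfold expected_traps_formula.
  induction r as [|r [IH1 IH2]].
  - split; intros []; simpl; field.
  - split; [exact IH2|]. intros [].
    + change (expected_traps true (S (S (S r))))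
        with ((1 + expected_traps false (S r) + expected_traps true (S r)) / 2).
      rewrite !IH1, !S_INR. simpl pow. field.
    + change (expected_traps false (S (S (S r))))
        with ((expected_traps true (S (S r)) + expected_traps false (S (S r))) / 2).
      rewrite !IH2, !S_INR. simpl pow. field.
Qed.

Lemma EW_small n : (n <= 1)%nat -> EW n = 0.
Proof.
  intros Hn. destruct n as [|[|n]]; [|rewrite EW_S; reflexivity|lia].
  unfold EW. simpl. field.
Qed.

Lemma EW_closed n : (2 <= n)%nat -> EW n = (3 * INR n - 2) / 18 - 8 / 9 * (-1/2) ^ n.
Proof.
  intros Hn. destruct n as [|[|r]]; [lia|lia|].
  rewrite EW_S, expected_traps_closed by lia. unfold expected_traps_formula.
  rewrite !S_INR. simpl pow. field.
Qed.

Lemma is_series_succ_pow z : Rabs z < 1 ->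
  is_series (fun n => INR (S n) * z ^ n) (/ (1 - z) * / (1 - z)).
Proof.
  intros Hz. assert (Habs : ex_series (fun n => Rabs (z ^ n))).
  { exists (/ (1 - Rabs z)). eapply is_series_ext; [|apply is_series_geom; now rewrite Rabs_Rabsolu].
    intros n. apply RPow_abs. }
  eapply is_series_ext;
    [|exact (is_series_mult _ _ _ _ (is_series_geom z Hz) (is_series_geom z Hz) Habs Habs)].
  intros n. cbv beta. rewrite (sum_eq _ (fun _ => z ^ n)).
  - rewrite sum_cte. apply Rmult_comm.
  - intros i Hi. rewrite <- pow_add. f_equal. lia.
Qed.

(* For [n >= 2], [EW n] is [(n + 1)/6 - 5/18 - 8/9 (-1/2)^n], so after the
   two vanishing initial terms the series splits into a derivative of the
   geometric series and two geometric series. *)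
Lemma is_series_EW z : Rabs z < 1 ->
  is_series (fun n => EW n * z ^ n) (z ^ 3 * (2 - z) / (2 * (1 - z) ^ 2 * (2 + z))).
Proof.
  intros Hz. destruct (Rabs_def2 _ _ Hz) as [Hz_lt Hz_gt].
  assert (Hhalf : Rabs (-1/2 * z) < 1).
  { rewrite Rabs_mult, (Rabs_left (-1/2)) by lra. pose proof (Rabs_pos z). lra. }
  pose proof (is_series_scal_r (z ^ 2 / 6) _ _ (is_series_succ_pow z Hz)) as Hlin.
  pose proof (is_series_scal_r (z ^ 2 / 18) _ _ (is_series_geom z Hz)) as Hgeom.
  pose proof (is_series_scal_r (-2/9 * z ^ 2) _ _ (is_series_geom _ Hhalf)) as Halt.
  apply (is_series_decr_n _ 2); [lia|].
  match goal with |- is_series _ ?L => replace L with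
    (/ (1 - z) * / (1 - z) * (z ^ 2 / 6) + / (1 - z) * (z ^ 2 / 18)
     + / (1 - -1/2 * z) * (-2/9 * z ^ 2)) end.
  - eapply is_series_ext; [|exact (is_series_plus _ _ _ _ (is_series_plus _ _ _ _ Hlin Hgeom) Halt)].
    intros k. cbn -[INR pow EW]. rewrite EW_closed by lia.
    rewrite Rpow_mult_distr, !S_INR. simpl pow. field.
  - rewrite sum_n_Reals. simpl sum_f_R0. rewrite !EW_small by lia. cbn. field.
    repeat split; lra.
Qed.

Lemma EW_formula n :
  EW (n + 3) = ((3 * INR n + 7) * powerRZ 2 (Z.of_nat n - 1) + (-1) ^ n) / (9 * 2 ^ n).
Proof.
  rewrite EW_closed by lia. rewrite plus_INR. simpl INR.
  replace (Z.of_nat n - 1)%Z with (Z.of_nat n + (-1))%Z by lia.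
  rewrite powerRZ_add, <- pow_powerRZ by lra. simpl powerRZ.
  replace (-1/2) with (-1 * / 2) by field. rewrite Rpow_mult_distr, pow_inv, !pow_add.
  simpl pow. field. apply pow_nonzero. lra.
Qed.

Theorem proposition4 :
  (forall z : R, Rabs z < 1 ->
     is_series (fun n : nat => EW n * z ^ n)
               (z ^ 3 * (2 - z) / (2 * (1 - z) ^ 2 * (2 + z))))
  /\
  (forall n : nat,
     EW (n + 3) =
       ((3 * INR n + 7) * powerRZ 2 (Z.of_nat n - 1) + (-1) ^ n) / (9 * 2 ^ n)).
Proof. split; [exact is_series_EW | exact EW_formula]. Qed.
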